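(* Let $L$ be a finite lattice and $\varphi\in M_\infty(L)$. Then the function $U\mapsto B_\varphi(U)$ on $\mathcal L$ is the Möbius extension of $\varphi$.
   Context: $L$ is a finite lattice with meet $\wedge$. $\mathcal L$ is the set of nonempty up-sets of $L$ ordered by $U\preceq V$ iff $U\supseteq V$ (a distributive lattice with meet = union). For $a\in L$, $\langle a\rangle^*=\{x\in L:x\ge a\}$. Completely monotone: all successive differences $\nabla_{a_1,\dots,a_n}\varphi\ge0$, where $\nabla_a\varphi(x)=\varphi(x)-\varphi(x\wedge a)$ iterated. $M_1(L)$: nonnegative monotone functions on $L$; $M_\infty(L)$, $M_\infty(\mathcal L)$: nonnegative completely monotone functions on $L$, resp. on $(\mathcal L,\preceq)$. $\Pi(\Phi)(x)=\Phi(\langle x\rangle^* )$. For $\varphi\in M_1(L)$ and $U\in\mathcal L$, $B_\varphi(U)=\min\{\Phi(U):\Phi\in M_\infty(\mathcal L),\ \Pi(\Phi)=\varphi\}$. For $\varphi\in M_\infty(L)$ with Möbius inverse $f$ ($\varphi(x)=\sum_{y\le x}f(y)$), its Möbius extension is $\Phi(U)=\sum_{V\preceq U}F(V)$ where $F(\langle x\rangle^* )=f(x)$ and $F=0$ on non-principal up-sets. *)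

From HB Require Import structures.
From mathcomp Require Import all_boot all_order all_algebra.
Set Implicit Arguments. Unset Strict Implicit. Unset Printing Implicit Defensive.
Import Order.TTheory GRing.Theory Num.Theory.
Local Open Scope ring_scope.

Section Defs.
Context {d : Order.disp_t} {L : finLatticeType d} {R : realFieldType}.

Definition is_upset (U : {set L}) : bool :=
  [forall x : L, forall y : L, ((x \in U) && (x <= y)%O) ==> (y \in U)].

Definition in_calL (U : {set L}) : bool := (U != set0) && is_upset U.

Definition principal (a : L) : {set L} := [set x | (a <= x)%O].

(* iterated successive differences w.r.t. a meet operation m:
   succ_diff m f [:: a1; ...; an] = nabla_{a1} (nabla_{a2} ... (nabla_{an} f)),
   where nabla_a g x = g x - g (m x a). *)
Fixpoint succ_diff {T : Type} (m : T -> T -> T) (f : T -> R) (s : seq T) : T -> R :=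
  match s with
  | [::] => f
  | a :: s' => fun x => succ_diff m f s' x - succ_diff m f s' (m x a)
  end.

(* M_infty(L): nonnegative (case s = [::]) completely monotone functions on L *)
Definition M_inf_L (phi : L -> R) : Prop :=
  forall (s : seq L) (x : L), 0 <= succ_diff (@Order.meet _ L) phi s x.

(* M_infty(\mathcal L): the order on \mathcal L is reverse inclusion, whose meet
   is union; functions are represented on {set L}, only values on \mathcal L matter *)
Definition M_inf_calL (Phi : {set L} -> R) : Prop :=
  forall s : seq {set L}, all in_calL s ->
  forall U : {set L}, in_calL U -> 0 <= succ_diff (@setU L) Phi s U.

Definition Pi (Phi : {set L} -> R) : L -> R := fun x => Phi (principal x).

(* b = B_phi(U) = min { Phi(U) : Phi in M_infty(calL), Pi(Phi) = phi }
   (the minimum is attained and equals b) *)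
Definition is_B_value (phi : L -> R) (U : {set L}) (b : R) : Prop :=
  (exists Phi : {set L} -> R, [/\ M_inf_calL Phi, Pi Phi =1 phi & Phi U = b]) /\
  (forall Phi : {set L} -> R, M_inf_calL Phi -> Pi Phi =1 phi -> b <= Phi U).

Definition mobius_F (f : L -> R) (V : {set L}) : R :=
  if [pick x | V == principal x] is Some x then f x else 0.

(* Moebius extension Phi(U) = sum_{V <= U in calL, i.e. V \supseteq U} F(V) *)
Definition mobius_ext (f : L -> R) (U : {set L}) : R :=
  \sum_(V : {set L} | in_calL V && (U \subset V)) mobius_F f V.

End Defs.

From HB Require Import structures.
From mathcomp Require Import all_boot all_order all_algebra.
Import Order.TTheory GRing.Theory Num.Theory.
Local Open Scope ring_scope.

(* For phi = sum of f below x, the Moebius extension of an up-set U is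
   phi (inf U), because <y>^* contains U iff y <= inf U.  The map U |-> inf U
   turns unions into meets, so the successive differences of U |-> phi (inf U)
   are those of phi and complete monotonicity transfers.  Conversely, every
   completely monotone Phi is antitone for inclusion (its first differences are
   nonnegative), and U is contained in <inf U>^*, so
   Phi U >= Phi <inf U>^* = phi (inf U) whenever Pi Phi = phi. *)

Lemma succ_diff_morph (R : realFieldType) (T T' : Type)
    (m : T -> T -> T) (m' : T' -> T' -> T') (P : pred T) (h : T -> T')
    (F : T -> R) (G : T' -> R) :
  {in P &, forall x y, P (m x y)} ->
  {in P &, {morph h : x y / m x y >-> m' x y}} ->
  {in P, forall x, F x = G (h x)} ->
  forall s, all P s ->
  {in P, forall x, succ_diff m F s x = succ_diff m' G (map h s) (h x)}.
Proof.
move=> mP hM FG; elim=> [|a s IH] /=; first by move=> _ x /FG.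
by move=> /andP[aP sP] x xP; rewrite -(hM x a) // !IH //; apply: mP.
Qed.

Section Lattice.
Context {d : Order.disp_t} {L : finLatticeType d}.

Lemma principal_inj : injective (@principal d L).
Proof.
move=> x y exy; apply/le_anti.
have yx : x \in principal y by rewrite -exy inE.
have xy : y \in principal x by rewrite exy inE.
by rewrite !inE in yx xy; rewrite xy yx.
Qed.

Lemma in_calL_principal (x : L) : in_calL (principal x).
Proof.
apply/andP; split; first by apply/set0Pn; exists x; rewrite inE.
apply/forallP => a; apply/forallP => b; apply/implyP => /andP[].
by rewrite !inE; apply: le_trans.
Qed.

Lemma in_calL_setU (U V : {set L}) : in_calL U -> in_calL V -> in_calL (U :|: V).
Proof.
move=> /andP[U0 /forallP upU] /andP[_ /forallP upV]; apply/andP; split.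
  by rewrite setU_eq0 negb_and U0.
apply/forallP => a; apply/forallP => b; apply/implyP => /andP[].
rewrite !inE => /orP[aU|aV] ab.
  by move/forallP/(_ b)/implyP: (upU a) ->; rewrite ?aU ?ab.
by move/forallP/(_ b)/implyP: (upV a) ->; rewrite ?aV ?ab ?orbT.
Qed.

Lemma eq_lower_bounds (a b : L) : (forall z, (z <= a)%O = (z <= b)%O) -> a = b.
Proof. by move=> ab; apply/le_anti; rewrite -ab lexx ab lexx. Qed.

Lemma le_foldr_meet (x0 z : L) (s : seq L) :
  (z <= foldr Order.meet x0 s)%O = (z <= x0)%O && all (fun u => z <= u)%O s.
Proof. by elim: s => [|a s IH] /=; rewrite ?andbT // lexI IH andbCA. Qed.

(* [L] may be empty, so the infimum needs a default [x0], returned only on the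
   empty set. *)
Variable x0 : L.

Definition setinf (V : {set L}) : L :=
  foldr Order.meet (odflt x0 [pick x in V]) (enum V).

Lemma le_setinf (V : {set L}) (z : L) :
  V != set0 -> (z <= setinf V)%O = (V \subset principal z).
Proof.
rewrite /setinf; case: pickP => [y yV _ | noV /set0Pn[y]]; last by rewrite noV.
rewrite /= le_foldr_meet; apply/idP/subsetP => [/andP[_ /allP zV] u uV|zV].
  by rewrite inE zV ?mem_enum.
have zle u : u \in V -> (z <= u)%O by move/zV; rewrite inE.
by rewrite zle //=; apply/allP => u; rewrite mem_enum; apply: zle.
Qed.

Lemma setinf_principal (x : L) : setinf (principal x) = x.
Proof.
have [nx _] := andP (in_calL_principal x).
apply: eq_lower_bounds => z; rewrite le_setinf //.
apply/subsetP/idP => [/(_ x)|zx u]; first by rewrite !inE lexx => /(_ isT).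
by rewrite !inE; exact: le_trans zx.
Qed.

Lemma setinfU (U V : {set L}) :
  U != set0 -> V != set0 -> setinf (U :|: V) = Order.meet (setinf U) (setinf V).
Proof.
move=> U0 V0; have UV0 : U :|: V != set0 by rewrite setU_eq0 negb_and U0.
by apply: eq_lower_bounds => z; rewrite lexI !le_setinf // subUset.
Qed.

Lemma sub_principal_setinf (U : {set L}) :
  U != set0 -> U \subset principal (setinf U).
Proof. by move=> U0; rewrite -le_setinf. Qed.

Section Functions.
Variable R : realFieldType.

Lemma mobius_extE (f : L -> R) (U : {set L}) :
  mobius_ext f U = \sum_(y : L | U \subset principal y) f y.
Proof.
have mobius_FE V : mobius_F f V = \sum_y (if V == principal y then f y else 0).
  rewrite /mobius_F; case: pickP => [x /eqP -> | noV]; last first.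
    by rewrite big1 // => y _; rewrite noV.
  rewrite (bigD1 x) //= eqxx big1 ?addr0 // => y /negbTE yx.
  by case: eqP => // /principal_inj xy; rewrite xy eqxx in yx.
rewrite /mobius_ext (eq_bigr _ (fun V _ => mobius_FE V)) exchange_big /=.
rewrite [RHS]big_mkcond; apply: eq_bigr => y _.
rewrite big_mkcond (bigD1 (principal y)) //= eqxx in_calL_principal /=.
rewrite big1 ?addr0; first by case: ifP.
by move=> V /negbTE ->; case: ifP.
Qed.

Lemma mobius_ext_setinf (phi f : L -> R) (V : {set L}) :
  (forall x, phi x = \sum_(y : L | (y <= x)%O) f y) ->
  V != set0 -> mobius_ext f V = phi (setinf V).
Proof.
by move=> phiE V0; rewrite mobius_extE phiE; apply: eq_bigl => y; rewrite le_setinf.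
Qed.

Lemma M_inf_calL_antitone (Phi : {set L} -> R) (U V : {set L}) :
  M_inf_calL Phi -> in_calL U -> in_calL V -> U \subset V -> Phi V <= Phi U.
Proof.
move=> PhiM UL VL /setUidPr UV.
by have /= := PhiM [:: V] _ U UL; rewrite VL UV subr_ge0; apply.
Qed.

End Functions.
End Lattice.

Theorem proposition3p7 (d : Order.disp_t) (L : finLatticeType d) (R : realFieldType)
    (phi : L -> R) (f : L -> R) :
  M_inf_L phi ->
  (forall x : L, phi x = \sum_(y : L | (y <= x)%O) f y) ->
  forall U : {set L}, in_calL U -> is_B_value phi U (mobius_ext f U).
Proof.
move=> phiM phiE U UL; have /andP[U0 _] := UL; have [x0 _] := set0Pn _ U0.
have nonempty V : in_calL V -> V != set0 by case/andP.
have extE V : in_calL V -> mobius_ext f V = phi (setinf x0 V).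
  by move=> /nonempty; apply: mobius_ext_setinf.
have PiE : Pi (mobius_ext f) =1 phi.
  by move=> x; rewrite /Pi extE ?in_calL_principal ?setinf_principal.
split.
  exists (mobius_ext f); split=> // s sL V VL.
  rewrite (@succ_diff_morph _ _ _ _ Order.meet in_calL (setinf x0) _ phi) //.
  - exact: in_calL_setU.
  - by move=> A B /nonempty A0 /nonempty B0; apply: setinfU.
move=> Phi PhiM PhiPi; rewrite extE // -PhiPi.
apply: M_inf_calL_antitone; rewrite ?in_calL_principal //.
exact: sub_principal_setinf.
Qed.
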